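(* There exists a finite set $B$ of closed, bounded line segments in $\mathbb{R}^2$ (one may take three segments) such that $R(B)=\{p\in\mathbb{R}^2: \text{every line through } p \text{ intersects } B\}$ has a maximal region consisting of a single point $p$ that does not lie on any segment of $B$.
   Context: A region is a bounded, closed, connected subset of $\mathbb{R}^2$. For a set $P\subseteq\mathbb{R}^2$, a maximal region of $P$ is a region $R$ such that for every point $p\in R$ there is an open ball $A$ centered at $p$ with $A\cap R = A\cap P$. A line intersects $B$ if it meets at least one segment of $B$. *)

(* points of R^2 are pairs (x, y) : R * R, with the
   product topology (which is the Euclidean topology). *)
From HB Require Import structures.
From mathcomp Require Import all_boot all_order all_algebra.
From mathcomp Require Import all_classical all_reals all_analysis.
Set Implicit Arguments. Unset Strict Implicit. Unset Printing Implicit Defensive.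
Import Order.TTheory GRing.Theory Num.Theory.
Import numFieldNormedType.Exports.
Local Open Scope classical_set_scope.
Local Open Scope ring_scope.

Notation pt R := (R * R)%type.

Definition dist2 (R : realType) (p q : pt R) : R :=
  (p.1 - q.1) ^+ 2 + (p.2 - q.2) ^+ 2.

Definition eball (R : realType) (p : pt R) (r : R) : set (pt R) :=
  [set q | dist2 p q < r ^+ 2].

Definition segment (R : realType) (s : pt R * pt R) : set (pt R) :=
  [set q | exists t : R, 0 <= t <= 1 /\
     q = (s.1.1 + t * (s.2.1 - s.1.1), s.1.2 + t * (s.2.2 - s.1.2))].

Definition line (R : realType) (p d : pt R) : set (pt R) :=
  [set q | exists u : R, q = (p.1 + u * d.1, p.2 + u * d.2)].

Definition line_meets (R : realType) (L : set (pt R)) (B : seq (pt R * pt R)) :=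
  exists2 s, s \in B & exists q, L q /\ segment s q.

Definition RB (R : realType) (B : seq (pt R * pt R)) : set (pt R) :=
  [set p | forall d : pt R, d != (0, 0) -> line_meets (line p d) B].

Definition bounded2 (R : realType) (A : set (pt R)) : Prop :=
  exists M : R, forall q, A q -> `|q.1| <= M /\ `|q.2| <= M.

Definition region (R : realType) (A : set (pt R)) : Prop :=
  bounded2 A /\ @closed (R * R)%type A /\ @connected (R * R)%type A.

Definition maximal_region (R : realType) (P A : set (pt R)) : Prop :=
  region A /\
  forall p, A p -> exists2 r : R, 0 < r & eball p r `&` A = eball p r `&` P.

(** The three segments [(-1,0)-(-1,-1)], [(1,1)-(0,1)] and [(0,-1)-(1,0)]
    surround the origin like the blades of a pinwheel: every line through the
    origin crosses one of them, since the line in direction [(a, b)] with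
    [a > 0] hits the third segment when [b <= 0], the first one when
    [0 < b <= a] (on the side [x < 0]) and the second one when [b > a].  Moving off the origin in any direction frees a line: above the
    origin the horizontal line escapes, to its left the vertical one and below
    the diagonal the line of slope one.  So the origin is an isolated point of
    [R(B)], and an isolated point is a maximal region. *)
From mathcomp Require Import all_boot all_order all_algebra.
From mathcomp Require Import all_classical all_reals all_analysis.
From mathcomp Require Import ring lra.
Import Order.TTheory GRing.Theory Num.Theory.
Import numFieldNormedType.Exports.
Local Open Scope classical_set_scope.
Local Open Scope ring_scope.

Section Plane.
Variable R : realType.

Lemma region_set1 (p : pt R) : region [set p].
Proof.
split; first by exists (Num.max `|p.1| `|p.2|) => q ->; rewrite !le_max !lexx orbT.
split; last exact: connected1.
exact/accessible_closed_set1/hausdorff_accessible/norm_hausdorff.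
Qed.

Lemma maximal_region_set1 (P : set (pt R)) (p : pt R) (r : R) :
  0 < r -> P p -> (forall q, eball p r q -> P q -> q = p) ->
  maximal_region P [set p].
Proof.
move=> r_gt0 Pp isolated; split; first exact: region_set1.
move=> _ ->; exists r => //; apply/seteqP; split => q [pq qP].
  by split => //; rewrite qP.
by split => //; apply: isolated.
Qed.

Lemma eball0_coord (x y r : R) :
  0 < r -> eball (0, 0) r (x, y) -> -r < x < r /\ -r < y < r.
Proof.
rewrite /eball /dist2 /= !sub0r !sqrrN !expr2 => r_gt0 xy_near.
have xx_lt : x * x < r * r by nra.
have yy_lt : y * y < r * r by nra.
by split; apply/andP; split; rewrite ltNge; apply/negP => ?; nra.
Qed.

Lemma line_opp (p : pt R) (a b : R) : line p (- a, - b) = line p (a, b).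
Proof.
apply/seteqP; split => q [u ->]; exists (- u) => /=; congr (_, _); ring.
Qed.

End Plane.

Section Pinwheel.
Variable R : realType.

Definition pinwheel : seq (pt R * pt R) :=
  [:: ((-1, 0), (-1, -1)); ((1, 1), (0, 1)); ((0, -1), (1, 0))].

Lemma pinwheel_ray (a b : R) : 0 < a ->
  exists2 s, s \in pinwheel & exists u : R, segment s (u * a, u * b).
Proof.
move=> a_gt0.
have [b_le0|b_gt0] := lerP b 0.
  have ab_gt0 : 0 < a - b by lra.
  exists ((0, -1), (1, 0)); first by rewrite !inE eqxx !orbT.
  exists (1 / (a - b)); exists (a / (a - b)); split.
    by apply/andP; split; [apply: divr_ge0 | rewrite ler_pdivrMr // mul1r]; lra.
  by rewrite /=; congr (_, _); field; lra.
have [b_le_a|a_lt_b] := lerP b a.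
  exists ((-1, 0), (-1, -1)); first by rewrite !inE eqxx.
  exists (-1 / a); exists (b / a); split.
    by apply/andP; split; [apply: divr_ge0 | rewrite ler_pdivrMr // mul1r]; lra.
  by rewrite /=; congr (_, _); field; lra.
exists ((1, 1), (0, 1)); first by rewrite !inE eqxx orbT.
exists (1 / b); exists (1 - a / b); split.
  have ab_le1 : a / b <= 1 by rewrite ler_pdivrMr // mul1r; lra.
  have ab_ge0 : 0 <= a / b by apply: divr_ge0; lra.
  by apply/andP; split; lra.
by rewrite /=; congr (_, _); field; lra.
Qed.

Lemma RB_pinwheel0 : RB pinwheel (0, 0).
Proof.
move=> [a b] /= d_neq0.
have ray_meets a' b' : 0 < a' -> line_meets (line (0, 0) (a', b')) pinwheel.
  move=> /(pinwheel_ray _ b') [s s_in [u su]]; exists s => //.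
  by exists (u * a', u * b'); split => //; exists u; rewrite /= !add0r.
have [a_lt0|a_gt0|a0] := ltrgtP a 0.
- by rewrite -line_opp; apply: ray_meets; rewrite oppr_gt0.
- exact: ray_meets.
subst a; have b_neq0 : b != 0 by apply: contraNneq d_neq0 => ->.
exists ((0, -1), (1, 0)); first by rewrite !inE eqxx !orbT.
exists (0, -1); split.
  by exists (-1 / b); rewrite /=; congr (_, _); [ring | field].
by exists 0; rewrite lexx ler01 /=; split => //; congr (_, _); ring.
Qed.

Ltac pinwheel_misses :=
  move=> [s]; rewrite !inE => /or3P [] /eqP -> [q [[u ->] [t [t01]]]] /= -[e1 e2];
  lra.

Lemma pinwheel_horizontal_misses (x y : R) : 0 < y < 1 ->
  ~ line_meets (line (x, y) (1, 0)) pinwheel.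
Proof. move=> /andP [y_gt0 y_lt1]; pinwheel_misses. Qed.

Lemma pinwheel_vertical_misses (x y : R) : -1 < x < 0 ->
  ~ line_meets (line (x, y) (0, 1)) pinwheel.
Proof. move=> /andP [x_gtN1 x_lt0]; pinwheel_misses. Qed.

Lemma pinwheel_diagonal_misses (x y : R) : x - 1 < y < x ->
  ~ line_meets (line (x, y) (1, 1)) pinwheel.
Proof. move=> /andP [xy_gt1 y_lt_x]; pinwheel_misses. Qed.

Lemma RB_pinwheel_near0 (q : pt R) :
  eball (0, 0) (1 / 2) q -> RB pinwheel q -> q = (0, 0).
Proof.
case: q => x y /eball0_coord [|/andP [x_gt x_lt] /andP [y_gt y_lt] xyRB]; first lra.
have y_le0 : y <= 0.
  rewrite leNgt; apply/negP => y_gt0.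
  apply: (pinwheel_horizontal_misses x y); first by apply/andP; split; lra.
  by apply: xyRB; rewrite xpair_eqE oner_eq0.
have x_ge0 : 0 <= x.
  rewrite leNgt; apply/negP => x_lt0.
  apply: (pinwheel_vertical_misses x y); first by apply/andP; split; lra.
  by apply: xyRB; rewrite xpair_eqE oner_eq0 andbF.
have x_le_y : x <= y.
  rewrite leNgt; apply/negP => y_lt_x.
  apply: (pinwheel_diagonal_misses x y); first by apply/andP; split; lra.
  by apply: xyRB; rewrite xpair_eqE oner_eq0.
by congr (_, _); lra.
Qed.

End Pinwheel.

Theorem lemma2 (R : realType) :
  exists B : seq (pt R * pt R),
    size B = 3%N /\ uniq B /\ (forall s, s \in B -> s.1 != s.2) /\
    exists p : pt R,
      maximal_region (RB B) [set p] /\ (forall s, s \in B -> ~ segment s p).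
Proof.
exists (pinwheel R); split; first by [].
split.
  by rewrite /= !inE !xpair_eqE /= !(eq_sym 0 1) !oppr_eq0 !oner_eq0 !andbF.
split.
  move=> s; rewrite !inE => /or3P [] /eqP -> /=; rewrite xpair_eqE;
    apply/negP => /andP [] /eqP h1 /eqP h2; lra.
exists (0, 0); split.
  apply: (@maximal_region_set1 _ _ _ (1 / 2)); first lra.
    exact: RB_pinwheel0.
  exact: RB_pinwheel_near0.
move=> s; rewrite !inE => /or3P [] /eqP -> [t [t01]] /= -[e1 e2]; lra.
Qed.
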